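(* Let $\nu\geq 1$ and $0<B\leq 2\sqrt{\frac{\pi}{2e}}$, and set $x_0:=\frac{2^{2\nu-1}\pi}{B^2}$. If $z>0$ satisfies both $$2z\;\geq\;\log x_0-\log\log x_0+\frac{e}{e-1}\,\frac{\log\log x_0}{\log x_0} \qquad\text{and}\qquad z\;\geq\;\max\left\{\frac{2}{e}\nu,\ \frac{\nu}{2}+\frac14\right\},$$ then $K_\nu(z)<B$.
   Context: $K_\nu$ denotes the modified Bessel function of the second kind of real order $\nu$, for real argument $z>0$. *)

From Stdlib Require Export Reals.
From Coquelicot Require Export Coquelicot.
Open Scope R_scope.

(* Modified Bessel function of the second kind, real order nu, argument z > 0,
   via the standard integral representation
     K_nu(z) = \int_0^oo exp(-z cosh t) cosh(nu t) dt   (valid for all real nu, z > 0). *)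
Definition BesselK (nu z : R) : R :=
  RInt_gen (fun t => exp (- z * cosh t) * cosh (nu * t))
           (at_point 0) (Rbar_locally p_infty).

(* With the phase g(t) = z cosh t - nu t, K_nu(z) is half the integral of exp (-g) over the
   real line, and g has its saddle point at a = arcsinh (nu / z).  On either side of a, exp (-g)
   is dominated by the derivative of 3/2 exp (-g) / (b -+ g') as soon as 3 b^2 / 4 <= g'', whence
     K_nu(z) <= 3/4 exp (-g a) (1 / b_L + 1 / b_R),   b_L^2 = 4 z / 3,   b_R^2 = 4 z cosh a / 3.
   In logarithms this bound is below B as soon as ln x0 + D < 2 z + ln (2 z), for an explicit
   "saddle defect" D(nu, z).  Two numerical facts close the argument:
   - D < 0, or D + z / 5 < 27 / 50 (the cut 27 / 50 is arbitrary), checked on a subdivision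
     of a, which is at most 1.12 because z >= 2 nu / e;
   - the hypothesis on 2 z forces ln x0 <= 2 z + ln (2 z), and even
     ln x0 <= 2 z + ln (2 z) - (27 / 50 - z / 5) when 2 z <= 27 / 5, checked on a subdivision
     of ln (2 z) in [ln 1.5, ln 5.4] (2 z >= 3 / 2 because z >= nu / 2 + 1 / 4).
   The cells are certified by exact rational evaluation of Taylor polynomials of exp. *)

From Stdlib Require Import Reals Lra Lia Classical Factorial Machin List.
From Stdlib Require Import QArith Qreals.
From Coquelicot Require Import Coquelicot.
Import ListNotations.
Open Scope R_scope.

Lemma cosh_sub_1 t : cosh t - 1 = 2 * sinh (t / 2) ^ 2.
Proof.
  unfold cosh, sinh.
  assert (Hu : exp (t / 2) * exp (- (t / 2)) = 1)
    by (rewrite <- exp_plus, Rplus_opp_r; apply exp_0).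
  replace t with (t / 2 + t / 2) at 1 by field.
  replace (- t) with (- (t / 2) + - (t / 2)) by field.
  rewrite !exp_plus; nra.
Qed.

Lemma cosh_ge_1 t : 1 <= cosh t.
Proof. generalize (cosh_sub_1 t) (pow2_ge_0 (sinh (t / 2))); lra. Qed.

Lemma sinh_le x y : x <= y -> sinh x <= sinh y.
Proof. intros [Hxy | ->]; [left; apply sinh_lt |]; lra. Qed.

Lemma sinh_ge_0 x : 0 <= x -> 0 <= sinh x.
Proof. intros Hx; rewrite <- sinh_0; apply sinh_le, Hx. Qed.

Lemma cosh_le x y : 0 <= x <= y -> cosh x <= cosh y.
Proof.
  intros [Hx Hxy].
  assert (H0 : 0 <= sinh (x / 2)) by (apply sinh_ge_0; lra).
  assert (H1 : sinh (x / 2) <= sinh (y / 2)) by (apply sinh_le; lra).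
  generalize (cosh_sub_1 x) (cosh_sub_1 y); nra.
Qed.

Lemma exp_le_exp x y : x <= y -> exp x <= exp y.
Proof. intros [H | ->]; [left; apply exp_increasing, H | right; reflexivity]. Qed.

Lemma ln_le x y : 0 < x -> x <= y -> ln x <= ln y.
Proof. intros Hx [H | ->]; [left; apply ln_increasing; assumption | right; reflexivity]. Qed.

Lemma ln_le_sub_1 x : 0 < x -> ln x <= x - 1.
Proof. intros Hx; generalize (exp_ineq1_le (ln x)); rewrite exp_ln by exact Hx; lra. Qed.

Lemma ln_lt_sub_1 x : 0 < x -> x <> 1 -> ln x < x - 1.
Proof.
  intros Hx H1; generalize (exp_ineq1 (ln x)); rewrite exp_ln by exact Hx.
  intros H; enough (1 + ln x < x) by lra.
  apply H; intros H0; apply H1; rewrite <- (exp_ln x), H0, exp_0 by exact Hx; reflexivity.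
Qed.

Lemma ln_div x y : 0 < x -> 0 < y -> ln (x / y) = ln x - ln y.
Proof.
  intros Hx Hy; unfold Rdiv.
  rewrite ln_mult, ln_Rinv by (try apply Rinv_0_lt_compat; assumption); ring.
Qed.

Lemma ln_sqrt x : 0 < x -> ln (sqrt x) = ln x / 2.
Proof.
  intros Hx.
  assert (Hs : 0 < sqrt x) by (apply sqrt_lt_R0, Hx).
  rewrite <- (sqrt_sqrt x) at 2 by lra.
  rewrite ln_mult by exact Hs; lra.
Qed.

Lemma Rdiv_le_Rdiv a b c d : 0 < b -> 0 < d -> a * d <= c * b -> a / b <= c / d.
Proof.
  intros Hb Hd H.
  apply (Rmult_le_reg_r (b * d)); [nra |].
  replace (a / b * (b * d)) with (a * d) by (field; lra).
  replace (c / d * (b * d)) with (c * b) by (field; lra).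
  exact H.
Qed.

Lemma exp_le_inv_of_le_exp_opp u p : 0 < p -> p <= exp (- u) -> exp u <= / p.
Proof.
  intros Hp Hpu; rewrite <- (Rinv_inv (exp u)), <- exp_Ropp.
  apply Rinv_le_contravar; assumption.
Qed.

Lemma le_of_is_derive_nonneg (phi dphi : R -> R) (x y : R) :
  x <= y ->
  (forall t, x <= t <= y -> is_derive phi t (dphi t)) ->
  (forall t, x <= t <= y -> 0 <= dphi t) ->
  phi x <= phi y.
Proof.
  intros Hxy Hd Hpos.
  destruct (MVT_gen phi x y dphi) as [c [Hc Hmvt]].
  - intros t Ht; rewrite Rmin_left, Rmax_right in Ht by exact Hxy; apply Hd; lra.
  - intros t Ht; rewrite Rmin_left, Rmax_right in Ht by exact Hxy.
    apply continuity_pt_filterlim, (@ex_derive_continuous R_AbsRing R_NormedModule).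
    exists (dphi t); apply Hd, Ht.
  - rewrite Rmin_left, Rmax_right in Hc by exact Hxy.
    assert (0 <= dphi c * (y - x)) by (apply Rmult_le_pos; [apply Hpos, Hc | lra]).
    lra.
Qed.

Lemma ln_ge_two_mul_div r : 1 <= r -> 2 * (r - 1) / (r + 1) <= ln r.
Proof.
  intros Hr.
  enough (ln 1 - 2 * (1 - 1) / (1 + 1) <= ln r - 2 * (r - 1) / (r + 1))
    by (rewrite ln_1 in *; lra).
  (* 1 / t - 4 / (t + 1)^2 = (t - 1)^2 / (t (t + 1)^2) *)
  apply (le_of_is_derive_nonneg (fun t => ln t - 2 * (t - 1) / (t + 1))
           (fun t => (t - 1) ^ 2 / (t * (t + 1) ^ 2))); [exact Hr | |].
  - intros t Ht; auto_derive; [lra | field; lra].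
  - intros t Ht; apply Rdiv_le_0_compat; [apply pow2_ge_0 |].
    apply Rmult_lt_0_compat; [| apply pow_lt]; lra.
Qed.

Lemma ln_ge_of_exp_le u E Y :
  exp u <= E -> E <= Y -> u + 2 * (Y - E) / (Y + E) <= ln Y.
Proof.
  intros HuE HEY.
  assert (HE : 0 < E) by (generalize (exp_pos u); lra).
  assert (Hu : u <= ln E) by (rewrite <- (ln_exp u); apply ln_le; [apply exp_pos | exact HuE]).
  assert (Hr := ln_ge_two_mul_div (Y / E) ltac:(apply Rcomplements.Rle_div_r; lra)).
  rewrite ln_div in Hr by lra.
  replace (2 * (Y / E - 1) / (Y / E + 1)) with (2 * (Y - E) / (Y + E)) in Hr by (field; lra).
  lra.
Qed.

Lemma ln_div_self_ge Ya Yb y :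
  1 <= Ya <= y -> y <= Yb -> ln Ya / Ya <= ln y / y \/ ln Yb / Yb <= ln y / y.
Proof.
  intros Hay Hyb.
  assert (Hd : forall t, 0 < t -> is_derive (fun s => ln s / s) t ((1 - ln t) / (t * t))).
  { intros t Ht; auto_derive; [lra | field; lra]. }
  destruct (Rle_lt_dec y (exp 1)) as [Hye | Hey]; [left | right].
  - apply (le_of_is_derive_nonneg (fun s => ln s / s) (fun t => (1 - ln t) / (t * t)));
      [lra | intros t Ht; apply Hd; lra |].
    intros t Ht; apply Rdiv_le_0_compat; [| nra].
    assert (ln t <= ln (exp 1)) by (apply ln_le; lra); rewrite ln_exp in *; lra.
  - enough (- (ln y / y) <= - (ln Yb / Yb)) by lra.
    apply (le_of_is_derive_nonneg (fun s => - (ln s / s)) (fun t => - ((1 - ln t) / (t * t))));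
      [lra | intros t Ht; apply (@is_derive_opp R_AbsRing R_NormedModule), Hd; lra |].
    intros t Ht.
    assert (ln (exp 1) < ln t) by (apply ln_increasing; [apply exp_pos | lra]).
    rewrite ln_exp in *.
    replace (- ((1 - ln t) / (t * t))) with ((ln t - 1) / (t * t)) by (field; lra).
    apply Rdiv_le_0_compat; nra.
Qed.

Lemma ex_RInt_of_continuous (h : R -> R) (x y : R) :
  (forall t, continuous h t) -> ex_RInt h x y.
Proof. intros Hc; apply (@ex_RInt_continuous R_CompleteNormedModule); intros; apply Hc. Qed.

Lemma RInt_le_of_is_derive (F dF h : R -> R) (x y : R) :
  x <= y ->
  (forall t, continuous h t) ->
  (forall t, x <= t <= y -> is_derive F t (dF t)) ->
  (forall t, x <= t <= y -> h t <= dF t) ->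
  RInt h x y <= F y - F x.
Proof.
  intros Hxy Hc HF Hh.
  set (Psi := fun t => F t - RInt h x t).
  assert (HPsi : Psi x <= Psi y).
  { apply (le_of_is_derive_nonneg Psi (fun t => dF t - h t)); [exact Hxy | |].
    - intros t Ht.
      apply (@is_derive_minus R_AbsRing R_NormedModule); [apply HF, Ht |].
      apply (@is_derive_RInt R_CompleteNormedModule h (RInt h x) x t); [| apply Hc].
      apply filter_forall; intros u.
      apply (@RInt_correct R_CompleteNormedModule), ex_RInt_of_continuous, Hc.
    - intros t Ht; specialize (Hh t Ht); lra. }
  unfold Psi in HPsi; rewrite RInt_point in HPsi; unfold zero in HPsi; simpl in HPsi.
  lra.
Qed.

Lemma RInt_gen_le_of_RInt_le (f : R -> R) (M : R) :
  (forall t, continuous f t) ->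
  (forall t, 0 <= t -> 0 <= f t) ->
  (forall b, 0 <= b -> RInt f 0 b <= M) ->
  RInt_gen f (at_point 0) (Rbar_locally p_infty) <= M.
Proof.
  intros Hc Hpos HM.
  set (E := fun y => exists b, 0 <= b /\ y = RInt f 0 b).
  destruct (completeness E) as [l [Hub Hlub]].
  { exists M; intros y [b [Hb ->]]; apply HM, Hb. }
  { exists (RInt f 0 0), 0; split; [lra | reflexivity]. }
  assert (Hmono : forall b c, 0 <= b <= c -> RInt f 0 b <= RInt f 0 c).
  { intros b c Hbc.
    rewrite <- (RInt_Chasles f 0 b c) by apply ex_RInt_of_continuous, Hc.
    assert (0 <= RInt f b c).
    { apply RInt_ge_0; [lra | apply ex_RInt_of_continuous, Hc |].
      intros t Ht; apply Hpos; lra. }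
    simpl; unfold plus; simpl; lra. }
  assert (Happrox : forall eps, 0 < eps -> exists b, 0 <= b /\ l - eps < RInt f 0 b).
  { intros eps Heps; apply NNPP; intros Hnot.
    assert (Hup : is_upper_bound E (l - eps)).
    { intros y [b [Hb ->]]; apply Rnot_lt_le; intros Hlt; apply Hnot; exists b; auto. }
    specialize (Hlub _ Hup); lra. }
  assert (Hlim : is_RInt_gen f (at_point 0) (Rbar_locally p_infty) l).
  { apply (filterlimi_lim_ext (fun ab => RInt f (fst ab) (snd ab))).
    - intros [a b]; apply (@RInt_correct R_CompleteNormedModule), ex_RInt_of_continuous, Hc.
    - apply filterlim_locally; intros [eps Heps].
      destruct (Happrox eps Heps) as [b0 [Hb0 Hlt]].
      apply (Filter_prod _ _ _ (fun a => a = 0) (fun b => b0 < b)); [reflexivity | now exists b0 |].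
      intros a b -> Hb; simpl.
      assert (RInt f 0 b <= l) by (apply Hub; exists b; split; [lra | reflexivity]).
      assert (RInt f 0 b0 <= RInt f 0 b) by (apply Hmono; lra).
      change (Rabs (RInt f 0 b - l) < eps); apply Rabs_def1; lra. }
  rewrite (is_RInt_gen_unique f l Hlim).
  apply Hlub; intros y [b [Hb ->]]; apply HM, Hb.
Qed.

(** * The saddle-point bound for the Bessel function *)

Lemma saddle_weight_ge_1 (x k b : R) :
  0 < b -> 0 <= x -> 3 * b ^ 2 / 4 <= k ->
  1 <= 3 / 2 * (x / (x + b) + k / (x + b) ^ 2).
Proof.
  intros Hb Hx Hk.
  replace (3 / 2 * (x / (x + b) + k / (x + b) ^ 2))
    with (3 / 2 * (x * (x + b) + k) / (x + b) ^ 2) by (field; lra).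
  apply Rcomplements.Rle_div_r; [apply pow_lt; lra |].
  (* the difference is (x - b/2)^2 + 3 (k - 3 b^2 / 4) / 2 *)
  generalize (pow2_ge_0 (x - b / 2)); nra.
Qed.

Section SaddleMajorant.

Variables (g dg d2g : R -> R) (b x y : R).
Hypotheses (Hb : 0 < b) (Hxy : x <= y)
  (Hg : forall t, is_derive g t (dg t)) (Hdg : forall t, is_derive dg t (d2g t))
  (Hd2g : forall t, x <= t <= y -> 3 * b ^ 2 / 4 <= d2g t).

Let continuous_exp_neg t : continuous (fun s => exp (- g s)) t.
Proof.
  apply (@ex_derive_continuous R_AbsRing R_NormedModule).
  auto_derive; exists (dg t); apply Hg.
Qed.

Lemma RInt_exp_neg_le_of_increasing :
  (forall t, x <= t <= y -> 0 <= dg t) ->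
  RInt (fun t => exp (- g t)) x y
    <= 3 / 2 * exp (- g x) / (dg x + b) - 3 / 2 * exp (- g y) / (dg y + b).
Proof.
  intros Hinc.
  set (F := fun t => - (3 / 2 * exp (- g t) / (dg t + b))).
  replace (_ - _) with (F y - F x) by (unfold F; ring).
  apply (RInt_le_of_is_derive F
    (fun t => 3 / 2 * exp (- g t) * (dg t / (dg t + b) + d2g t / (dg t + b) ^ 2)));
    [exact Hxy | exact continuous_exp_neg | |].
  - intros t Ht; specialize (Hinc t Ht); unfold F.
    auto_derive; [repeat split; try (exists (dg t); apply Hg);
                  try (exists (d2g t); apply Hdg); lra |].
    replace (Derive (fun s : R => g s) t) with (dg t) by (symmetry; apply is_derive_unique, Hg).
    replace (Derive (fun s : R => dg s) t) with (d2g t) by (symmetry; apply is_derive_unique, Hdg).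
    field; lra.
  - intros t Ht.
    generalize (saddle_weight_ge_1 (dg t) (d2g t) b Hb (Hinc t Ht) (Hd2g t Ht))
      (exp_pos (- g t)); nra.
Qed.

Lemma RInt_exp_neg_le_of_decreasing :
  (forall t, x <= t <= y -> dg t <= 0) ->
  RInt (fun t => exp (- g t)) x y
    <= 3 / 2 * exp (- g y) / (b - dg y) - 3 / 2 * exp (- g x) / (b - dg x).
Proof.
  intros Hdec.
  set (F := fun t => 3 / 2 * exp (- g t) / (b - dg t)).
  change (_ - _) with (F y - F x).
  apply (RInt_le_of_is_derive F
    (fun t => 3 / 2 * exp (- g t) * (- dg t / (- dg t + b) + d2g t / (- dg t + b) ^ 2)));
    [exact Hxy | exact continuous_exp_neg | |].
  - intros t Ht; specialize (Hdec t Ht); unfold F.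
    auto_derive; [repeat split; try (exists (dg t); apply Hg);
                  try (exists (d2g t); apply Hdg); lra |].
    replace (Derive (fun s : R => g s) t) with (dg t) by (symmetry; apply is_derive_unique, Hg).
    replace (Derive (fun s : R => dg s) t) with (d2g t) by (symmetry; apply is_derive_unique, Hdg).
    field; lra.
  - intros t Ht.
    assert (Hndg : 0 <= - dg t) by (specialize (Hdec t Ht); lra).
    generalize (saddle_weight_ge_1 (- dg t) (d2g t) b Hb Hndg (Hd2g t Ht))
      (exp_pos (- g t)); nra.
Qed.

End SaddleMajorant.

Definition phase (nu z t : R) : R := z * cosh t - nu * t.

Definition saddle_bound (nu z : R) : R :=
  let a := arcsinh (nu / z) in
  3 / 4 * exp (- phase nu z a) / sqrt (4 * z / 3) * (1 + / sqrt (cosh a)).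

Lemma is_derive_phase nu z t : is_derive (phase nu z) t (z * sinh t - nu).
Proof. unfold phase, cosh, sinh; auto_derive; [easy | lra]. Qed.

Lemma is_derive_phase_derivative nu z t :
  is_derive (fun s => z * sinh s - nu) t (z * cosh t).
Proof. unfold cosh, sinh; auto_derive; [easy | lra]. Qed.

Lemma continuous_exp_neg_phase nu z t : continuous (fun s => exp (- phase nu z s)) t.
Proof.
  apply (@ex_derive_continuous R_AbsRing R_NormedModule).
  unfold phase, cosh; auto_derive; easy.
Qed.

Lemma continuous_BesselK_integrand nu z t :
  continuous (fun s => exp (- z * cosh s) * cosh (nu * s)) t.
Proof.
  apply (@ex_derive_continuous R_AbsRing R_NormedModule).
  unfold cosh; auto_derive; easy.
Qed.

Lemma BesselK_integrand_ge_0 nu z t : 0 <= exp (- z * cosh t) * cosh (nu * t).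
Proof.
  apply Rmult_le_pos; [apply Rlt_le, exp_pos |].
  generalize (cosh_ge_1 (nu * t)); lra.
Qed.

Lemma BesselK_integrand_eq nu z t :
  exp (- z * cosh t) * cosh (nu * t)
    = (exp (- phase nu z t) + exp (- phase (- nu) z t)) / 2.
Proof.
  unfold phase, cosh at 2.
  replace (- (z * cosh t - nu * t)) with (- z * cosh t + nu * t) by ring.
  replace (- (z * cosh t - - nu * t)) with (- z * cosh t + - (nu * t)) by ring.
  rewrite !exp_plus; lra.
Qed.

Lemma RInt_BesselK_integrand_split nu z a c :
  RInt (fun t => exp (- z * cosh t) * cosh (nu * t)) 0 c
    = (RInt (fun t => exp (- phase nu z t)) 0 a + RInt (fun t => exp (- phase nu z t)) a c
       + RInt (fun t => exp (- phase (- nu) z t)) 0 c) / 2.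
Proof.
  set (eg := fun t => exp (- phase nu z t)); set (eh := fun t => exp (- phase (- nu) z t)).
  assert (Heg : forall x y, ex_RInt eg x y)
    by (intros; apply ex_RInt_of_continuous, continuous_exp_neg_phase).
  assert (Heh : forall x y, ex_RInt eh x y)
    by (intros; apply ex_RInt_of_continuous, continuous_exp_neg_phase).
  rewrite (RInt_ext _ (fun t => scal (/ 2) (plus (eg t) (eh t))))
    by (intros t _; unfold eg, eh; rewrite BesselK_integrand_eq;
        unfold scal, plus; simpl; unfold mult; simpl; lra).
  rewrite (@RInt_scal R_CompleteNormedModule);
    [| apply (@ex_RInt_plus R_CompleteNormedModule); [apply Heg | apply Heh]].
  rewrite (@RInt_plus R_CompleteNormedModule); [| apply Heg | apply Heh].
  rewrite <- (@RInt_Chasles R_CompleteNormedModule eg 0 a c); [| apply Heg | apply Heg].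
  unfold scal, plus; simpl; unfold mult; simpl; lra.
Qed.

Section SaddlePoint.

Variables nu z : R.
Hypotheses (Hnu : 0 < nu) (Hz : 0 < z).

Let a := arcsinh (nu / z).
Let bL := sqrt (4 * z / 3).
Let bR := sqrt (4 * z * cosh a / 3).

Let saddle_pos : 0 < a.
Proof. unfold a; rewrite <- arcsinh_0; apply arcsinh_lt, Rdiv_lt_0_compat; lra. Qed.

Let sinh_saddle : z * sinh a - nu = 0.
Proof. unfold a; rewrite sinh_arcsinh; field; lra. Qed.

Let bL_pos : 0 < bL.
Proof. apply sqrt_lt_R0; lra. Qed.

Let bL_sqr : 3 * bL ^ 2 / 4 = z.
Proof. unfold bL; rewrite <- Rsqr_pow2, Rsqr_sqrt; lra. Qed.

Let phase_0 : phase nu z 0 = z.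
Proof. unfold phase; rewrite cosh_0; ring. Qed.

Let z_cosh_ge t : z <= z * cosh t.
Proof. generalize (cosh_ge_1 t); nra. Qed.

Lemma RInt_exp_neg_phase_left :
  RInt (fun t => exp (- phase nu z t)) 0 a
    <= 3 / 2 * exp (- phase nu z a) / bL - 3 / 2 * exp (- z) / (nu + bL).
Proof.
  generalize (RInt_exp_neg_le_of_decreasing (phase nu z) (fun t => z * sinh t - nu)
    (fun t => z * cosh t) bL 0 a bL_pos (Rlt_le _ _ saddle_pos) (is_derive_phase nu z)
    (is_derive_phase_derivative nu z)).
  rewrite sinh_saddle, sinh_0, phase_0, Rminus_0_r.
  replace (bL - (z * 0 - nu)) with (nu + bL) by ring.
  intros H; apply H.
  - intros t _; rewrite bL_sqr; apply z_cosh_ge.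
  - intros t [_ Ht]; generalize (sinh_le t a Ht); rewrite <- sinh_saddle; nra.
Qed.

Lemma RInt_exp_neg_phase_right c :
  a <= c -> RInt (fun t => exp (- phase nu z t)) a c <= 3 / 2 * exp (- phase nu z a) / bR.
Proof.
  intros Hac.
  assert (HC := cosh_ge_1 a).
  assert (HbR : 0 < bR) by (apply sqrt_lt_R0; nra).
  assert (HbR2 : 3 * bR ^ 2 / 4 = z * cosh a)
    by (unfold bR; rewrite <- Rsqr_pow2, Rsqr_sqrt; nra).
  assert (Hdg : forall t, a <= t -> 0 <= z * sinh t - nu)
    by (intros t Ht; generalize (sinh_le a t Ht); rewrite <- sinh_saddle; nra).
  generalize (RInt_exp_neg_le_of_increasing (phase nu z) (fun t => z * sinh t - nu)
    (fun t => z * cosh t) bR a c HbR Hac (is_derive_phase nu z)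
    (is_derive_phase_derivative nu z)).
  rewrite sinh_saddle, Rplus_0_l; intros H.
  assert (0 < 3 / 2 * exp (- phase nu z c) / (z * sinh c - nu + bR)).
  { apply Rdiv_lt_0_compat; [generalize (exp_pos (- phase nu z c)); lra |].
    generalize (Hdg c Hac); lra. }
  enough (RInt (fun t => exp (- phase nu z t)) a c
            <= 3 / 2 * exp (- phase nu z a) / bR
               - 3 / 2 * exp (- phase nu z c) / (z * sinh c - nu + bR)) by lra.
  apply H.
  - intros t Ht; rewrite HbR2; generalize (cosh_le a t ltac:(lra)); nra.
  - intros t Ht; apply Hdg; lra.
Qed.

Lemma RInt_exp_neg_phase_opp c :
  0 <= c -> RInt (fun t => exp (- phase (- nu) z t)) 0 c <= 3 / 2 * exp (- z) / (nu + bL).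
Proof.
  intros Hc.
  assert (Hdg : forall t, 0 <= t -> 0 <= z * sinh t - - nu)
    by (intros t Ht; generalize (sinh_ge_0 t Ht); nra).
  generalize (RInt_exp_neg_le_of_increasing (phase (- nu) z) (fun t => z * sinh t - - nu)
    (fun t => z * cosh t) bL 0 c bL_pos Hc (is_derive_phase (- nu) z)
    (is_derive_phase_derivative (- nu) z)).
  rewrite sinh_0; replace (phase (- nu) z 0) with z by (unfold phase; rewrite cosh_0; ring).
  replace (z * 0 - - nu + bL) with (nu + bL) by ring; intros H.
  assert (0 < 3 / 2 * exp (- phase (- nu) z c) / (z * sinh c - - nu + bL)).
  { apply Rdiv_lt_0_compat; [generalize (exp_pos (- phase (- nu) z c)); lra |].
    generalize (Hdg c Hc); lra. }
  enough (RInt (fun t => exp (- phase (- nu) z t)) 0 c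
            <= 3 / 2 * exp (- z) / (nu + bL)
               - 3 / 2 * exp (- phase (- nu) z c) / (z * sinh c - - nu + bL)) by lra.
  apply H.
  - intros t _; rewrite bL_sqr; apply z_cosh_ge.
  - intros t Ht; apply Hdg; lra.
Qed.

Lemma saddle_bound_eq : saddle_bound nu z = 3 / 4 * exp (- phase nu z a) * (/ bL + / bR).
Proof.
  assert (HC := cosh_ge_1 a).
  assert (Hs : 0 < sqrt (cosh a)) by (apply sqrt_lt_R0; lra).
  assert (HbR : bR = bL * sqrt (cosh a))
    by (unfold bR, bL; rewrite <- sqrt_mult by lra; f_equal; field).
  unfold saddle_bound; cbv zeta; fold a bL; rewrite HbR.
  field; lra.
Qed.

Lemma RInt_BesselK_integrand_le b :
  0 <= b -> RInt (fun t => exp (- z * cosh t) * cosh (nu * t)) 0 b <= saddle_bound nu z.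
Proof.
  intros Hb.
  set (f := fun t => exp (- z * cosh t) * cosh (nu * t)).
  set (c := Rmax a b).
  assert (Hac : a <= c) by apply Rmax_l.
  assert (Hbc : b <= c) by apply Rmax_r.
  assert (Hmono : RInt f 0 b <= RInt f 0 c).
  { rewrite <- (RInt_Chasles f 0 b c)
      by apply ex_RInt_of_continuous, continuous_BesselK_integrand.
    assert (0 <= RInt f b c).
    { apply RInt_ge_0; [lra | apply ex_RInt_of_continuous, continuous_BesselK_integrand |].
      intros t _; apply BesselK_integrand_ge_0. }
    simpl; unfold plus; simpl; lra. }
  assert (Hsplit := RInt_BesselK_integrand_split nu z a c); fold f in Hsplit.
  generalize RInt_exp_neg_phase_left (RInt_exp_neg_phase_right c Hac)
    (RInt_exp_neg_phase_opp c ltac:(generalize saddle_pos; lra)).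
  rewrite saddle_bound_eq; unfold Rdiv; lra.
Qed.

End SaddlePoint.

Lemma BesselK_le_saddle_bound nu z :
  0 < nu -> 0 < z -> BesselK nu z <= saddle_bound nu z.
Proof.
  intros Hnu Hz; unfold BesselK.
  apply RInt_gen_le_of_RInt_le; [apply continuous_BesselK_integrand | |].
  - intros t _; apply BesselK_integrand_ge_0.
  - intros b Hb; apply RInt_BesselK_integrand_le; assumption.
Qed.

(** * Taylor bounds for exp, evaluated in exact rational arithmetic *)

Fixpoint exp_taylor (n : nat) (x : R) : R :=
  match n with
  | O => 1
  | S m => exp_taylor m x + x ^ S m / INR (fact (S m))
  end.

Lemma exp_taylor_0 n : exp_taylor n 0 = 1.
Proof.
  induction n as [| n IH]; [reflexivity |].
  cbn [exp_taylor]; rewrite IH, pow_i by lia; unfold Rdiv; ring.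
Qed.

Lemma is_derive_exp_taylor n x : is_derive (exp_taylor (S n)) x (exp_taylor n x).
Proof.
  induction n as [| n IH].
  - cbn [exp_taylor]; auto_derive; [easy | simpl; field].
  - change (exp_taylor (S (S n))) with
      (fun y => exp_taylor (S n) y + y ^ S (S n) / INR (fact (S (S n)))).
    apply (@is_derive_plus R_AbsRing R_NormedModule); [exact IH |].
    assert (Hf : INR (fact (S (S n))) = INR (S (S n)) * INR (fact (S n)))
      by (rewrite <- mult_INR; reflexivity).
    assert (Hp := is_derive_scal _ x (/ INR (fact (S (S n)))) _
                    (is_derive_pow (fun y => y) (S (S n)) x 1 (is_derive_id x))).
    apply (is_derive_ext _ _ _ _ (fun y => Rmult_comm _ _)) in Hp.
    replace (x ^ S n / INR (fact (S n)))
      with (/ INR (fact (S (S n))) * (INR (S (S n)) * 1 * x ^ pred (S (S n)))).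
    + exact Hp.
    + rewrite Hf; simpl pred; field; split; [apply INR_fact_neq_0 | apply not_0_INR; lia].
Qed.

Lemma exp_taylor_le_exp n x : 0 <= x -> exp_taylor n x <= exp x.
Proof.
  revert x; induction n as [| n IH]; intros x Hx.
  - simpl; rewrite <- exp_0; apply exp_le_exp, Hx.
  - enough (exp 0 - exp_taylor (S n) 0 <= exp x - exp_taylor (S n) x)
      by (rewrite exp_0, exp_taylor_0 in *; lra).
    apply (le_of_is_derive_nonneg (fun t => exp t - exp_taylor (S n) t)
      (fun t => exp t - exp_taylor n t)); [exact Hx | |].
    + intros t _; apply (@is_derive_minus R_AbsRing R_NormedModule);
        [apply is_derive_exp | apply is_derive_exp_taylor].
    + intros t Ht; specialize (IH t (proj1 Ht)); lra.
Qed.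

Lemma exp_taylor_ge_1_add n x : 0 <= x -> 1 + x <= exp_taylor (S n) x.
Proof.
  intros Hx; induction n as [| n IH].
  - cbn [exp_taylor fact]; simpl; lra.
  - cbn [exp_taylor]; cbn [exp_taylor] in IH.
    assert (0 <= x ^ S (S n) / INR (fact (S (S n)))).
    { apply Rmult_le_pos; [apply pow_le, Hx | apply Rlt_le, Rinv_0_lt_compat, INR_fact_lt_0]. }
    lra.
Qed.

Lemma exp_taylor_opp_alternating n x :
  0 <= x -> 0 <= (-1) ^ n * (exp_taylor n (- x) - exp (- x)).
Proof.
  revert x; induction n as [| n IH]; intros x Hx.
  - assert (exp (- x) <= 1) by (rewrite <- exp_0; apply exp_le_exp; lra); simpl; lra.
  - set (phi := fun t => (-1) ^ S n * (exp_taylor (S n) (- t) - exp (- t))).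
    assert (Hphi0 : phi 0 = 0) by (unfold phi; rewrite Ropp_0, exp_taylor_0, exp_0; ring).
    change (0 <= phi x); rewrite <- Hphi0.
    apply (le_of_is_derive_nonneg phi (fun t => (-1) ^ n * (exp_taylor n (- t) - exp (- t))));
      [exact Hx | | intros t Ht; apply IH, Ht].
    intros t _.
    assert (Hd : is_derive (fun s => exp_taylor (S n) (- s)) t (- exp_taylor n (- t))).
    { replace (- exp_taylor n (- t)) with (scal (-1) (exp_taylor n (- t)))
        by (unfold scal; simpl; unfold mult; simpl; ring).
      apply (is_derive_comp (exp_taylor (S n)) (fun s => - s));
        [apply is_derive_exp_taylor | auto_derive; [easy | ring]]. }
    assert (He : is_derive (fun s => exp (- s)) t (- exp (- t)))
      by (auto_derive; [easy | ring]).
    replace ((-1) ^ n * (exp_taylor n (- t) - exp (- t)))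
      with ((-1) ^ S n * (- exp_taylor n (- t) - - exp (- t))) by (simpl; ring).
    apply is_derive_scal, (@is_derive_minus R_AbsRing R_NormedModule); assumption.
Qed.

Lemma exp_taylor_opp_le n x : Nat.odd n = true -> 0 <= x -> exp_taylor n (- x) <= exp (- x).
Proof.
  intros Hn Hx; generalize (exp_taylor_opp_alternating n x Hx).
  destruct (Nat.odd_spec n) as [[k ->] _]; [exact Hn |].
  rewrite pow_add, pow_mult; simpl; rewrite Rmult_1_r.
  replace (-1 * -1) with 1 by ring; rewrite pow1; lra.
Qed.

Lemma ln_le_of_le_exp_taylor n q r : 0 < q -> 0 <= r -> q <= exp_taylor n r -> ln q <= r.
Proof.
  intros Hq Hr Hle; rewrite <- (ln_exp r).
  apply ln_le; [exact Hq |]; generalize (exp_taylor_le_exp n r Hr); lra.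
Qed.

Lemma le_ln_of_exp_taylor_opp n q r :
  Nat.odd n = true -> 0 < q -> 0 <= r -> 1 <= q * exp_taylor n (- r) -> r <= ln q.
Proof.
  intros Hn Hq Hr Hle; rewrite <- (ln_exp r).
  apply ln_le; [apply exp_pos |].
  assert (Hinv : exp r * exp (- r) = 1) by (rewrite <- exp_plus, Rplus_opp_r; apply exp_0).
  assert (Hlow := exp_taylor_opp_le n r Hn Hr).
  assert (Hr0 := exp_pos r).
  assert (0 <= exp r * (q * exp_taylor n (- r) - 1)) by (apply Rmult_le_pos; lra).
  assert (0 <= exp r * q * (exp (- r) - exp_taylor n (- r)))
    by (apply Rmult_le_pos; [apply Rmult_le_pos |]; lra).
  nra.
Qed.

Lemma sinh_ge_of_exp_taylor n x :
  0 <= x -> 0 < exp_taylor n x ->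
  (exp_taylor n x * exp_taylor n x - 1) / (2 * exp_taylor n x) <= sinh x.
Proof.
  intros Hx HE; set (E := exp_taylor n x) in *.
  assert (HEX : E <= exp x) by apply exp_taylor_le_exp, Hx.
  assert (HX := exp_pos x).
  replace (sinh x) with ((exp x * exp x - 1) / (2 * exp x))
    by (unfold sinh; rewrite exp_Ropp; field; apply Rgt_not_eq, HX).
  assert (0 <= (exp x - E) * (exp x * E + 1))
    by (apply Rmult_le_pos; [lra | generalize (Rmult_lt_0_compat _ _ HX HE); lra]).
  apply Rdiv_le_Rdiv; nra.
Qed.

Fixpoint Qpow (x : Q) (n : nat) : Q :=
  match n with O => 1 | S m => x * Qpow x m end.

Fixpoint Zfact (n : nat) : Z :=
  match n with O => 1%Z | S m => (Z.of_nat (S m) * Zfact m)%Z end.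

Fixpoint exp_taylorQ (n : nat) (x : Q) : Q :=
  match n with
  | O => 1
  | S m => Qred (exp_taylorQ m x + Qpow x (S m) / inject_Z (Zfact (S m)))
  end.

Definition Qltb (x y : Q) : bool := negb (Qle_bool y x).

Lemma Qnonzero_of_Q2R x : Q2R x <> 0 -> ~ x == 0.
Proof. intros Hx Heq; apply Hx; rewrite (Qeq_eqR _ _ Heq); unfold Q2R; simpl; ring. Qed.

Lemma Q2R_div_pos x y : 0 < Q2R y -> Q2R (x / y) = Q2R x / Q2R y.
Proof. intros Hy; apply Q2R_div, Qnonzero_of_Q2R; lra. Qed.

Lemma Q2R_inv_pos x : 0 < Q2R x -> Q2R (/ x) = / Q2R x.
Proof. intros Hx; apply Q2R_inv, Qnonzero_of_Q2R; lra. Qed.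

Lemma Q2R_Qmake z p : Q2R (z # p) = IZR z / IZR (Zpos p).
Proof. reflexivity. Qed.

Lemma Q2R_Qmake_1 z : Q2R (z # 1) = IZR z.
Proof. unfold Q2R; simpl; field. Qed.

Lemma Q2R_Qred q : Q2R (Qred q) = Q2R q.
Proof. apply Qeq_eqR, Qred_correct. Qed.

Lemma Q2R_Qpow x n : Q2R (Qpow x n) = Q2R x ^ n.
Proof.
  induction n as [| n IH]; simpl; [apply Q2R_Qmake_1 | rewrite Q2R_mult, IH; ring].
Qed.

Lemma IZR_Zfact n : IZR (Zfact n) = INR (fact n).
Proof.
  induction n as [| n IH]; [reflexivity |].
  cbn [Zfact fact]; rewrite mult_IZR, IH, <- INR_IZR_INZ, <- mult_INR; reflexivity.
Qed.

Lemma Q2R_exp_taylorQ n x : Q2R (exp_taylorQ n x) = exp_taylor n (Q2R x).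
Proof.
  induction n as [| n IH]; [apply Q2R_Qmake_1 |].
  assert (Hf : Q2R (inject_Z (Zfact (S n))) = INR (fact (S n)))
    by (unfold Q2R; cbn [inject_Z Qnum Qden]; rewrite IZR_Zfact; field).
  cbn [exp_taylorQ exp_taylor].
  rewrite Q2R_Qred, Q2R_plus, Q2R_div_pos, Q2R_Qpow, Hf, IH;
    [reflexivity | rewrite Hf; apply INR_fact_lt_0].
Qed.

Lemma Qle_bool_Q2R x y : Qle_bool x y = true -> Q2R x <= Q2R y.
Proof. intros H; apply Qle_Rle, Qle_bool_iff, H. Qed.

Lemma Qltb_Q2R x y : Qltb x y = true -> Q2R x < Q2R y.
Proof.
  unfold Qltb; intros H; apply Qlt_Rlt, Qnot_le_lt; intros Hle.
  apply Qle_bool_iff in Hle; rewrite Hle in H; discriminate.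
Qed.

Ltac Q2R_simpl :=
  repeat first [ rewrite Q2R_plus | rewrite Q2R_minus | rewrite Q2R_mult | rewrite Q2R_opp
               | rewrite Q2R_Qmake_1 | rewrite Q2R_Qmake
               | rewrite Q2R_inv_pos by (Q2R_simpl; nra)
               | rewrite Q2R_div_pos by (Q2R_simpl; nra) ].

Ltac Q2R_simpl_in H :=
  repeat first [ rewrite Q2R_plus in H | rewrite Q2R_minus in H | rewrite Q2R_mult in H
               | rewrite Q2R_opp in H | rewrite Q2R_Qmake_1 in H | rewrite Q2R_Qmake in H
               | rewrite Q2R_inv_pos in H by (Q2R_simpl; nra)
               | rewrite Q2R_div_pos in H by (Q2R_simpl; nra) ].

Ltac exp_taylor_check a x :=
  let H := fresh in
  assert (H : Qle_bool a (exp_taylorQ 11 x) = true) by (vm_compute; reflexivity);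
  apply Qle_bool_Q2R in H; rewrite Q2R_exp_taylorQ in H; Q2R_simpl_in H.

Fixpoint chainb (cellb : Q -> Q -> bool) (lo : Q) (bs : list Q) : bool :=
  match bs with
  | nil => true
  | hi :: bs' => cellb lo hi && chainb cellb hi bs'
  end.

Lemma chainb_cover (P : R -> Prop) (cellb : Q -> Q -> bool) :
  (forall lo hi, cellb lo hi = true -> forall x, Q2R lo <= x <= Q2R hi -> P x) ->
  forall bs lo hi, chainb cellb lo (bs ++ hi :: nil) = true ->
  forall x, Q2R lo <= x <= Q2R hi -> P x.
Proof.
  intros Hcell bs; induction bs as [| b bs IH]; intros lo hi Hchain x Hx; simpl in Hchain.
  - apply andb_prop in Hchain as [Hc _]; exact (Hcell lo hi Hc x Hx).
  - apply andb_prop in Hchain as [Hc Hchain].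
    destruct (Rle_lt_dec x (Q2R b)) as [Hxb | Hbx].
    + apply (Hcell lo b Hc); lra.
    + apply (IH b hi Hchain); lra.
Qed.

Lemma PI_ge : 314159 / 100000 <= PI.
Proof.
  destruct (PI_2_3_7_ineq 2) as [H _].
  unfold tg_alt, PI_2_3_7_tg, Ratan_seq in H; simpl in H; lra.
Qed.

Lemma ln_2_ge : 693147 / 1000000 <= ln 2.
Proof.
  exp_taylor_check (1 # 2)%Q (- (693147 # 1000000))%Q.
  apply (le_ln_of_exp_taylor_opp 11); [reflexivity | lra | lra | lra].
Qed.

Lemma ln_3_le : ln 3 <= 1098613 / 1000000.
Proof.
  exp_taylor_check 3%Q (1098613 # 1000000)%Q.
  apply (ln_le_of_le_exp_taylor 11); lra.
Qed.

Lemma ln_PI_ge : 114472 / 100000 <= ln PI.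
Proof.
  exp_taylor_check (100000 # 314159)%Q (- (114472 # 100000))%Q.
  assert (HPI := PI_ge).
  apply (le_ln_of_exp_taylor_opp 11); [reflexivity | lra | lra | nra].
Qed.

Lemma exp_1_bounds : 2718 / 1000 <= exp 1 <= 27183 / 10000.
Proof.
  split.
  - exp_taylor_check (2718 # 1000)%Q 1%Q.
    apply Rle_trans with (exp_taylor 11 1); [lra | apply exp_taylor_le_exp; lra].
  - exp_taylor_check (10000 # 27183)%Q (- (1))%Q.
    rewrite <- (exp_ln (27183 / 10000)) by lra; apply exp_le_exp.
    apply (le_ln_of_exp_taylor_opp 11); [reflexivity | lra | lra | lra].
Qed.

(** * The saddle defect *)

Definition saddle_defect (nu z : R) : R :=
  let a := arcsinh (nu / z) in
  2 * nu * (a - ln 2) - 2 * z * (cosh a - 1)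
  + (3 * ln 3 - 4 * ln 2 + 2 * ln (1 + / sqrt (cosh a)) - ln PI).

Lemma saddle_bound_lt nu z B :
  0 < z -> 0 < B ->
  ln (Rpower 2 (2 * nu - 1) * PI / B ^ 2) + saddle_defect nu z < 2 * z + ln (2 * z) ->
  saddle_bound nu z < B.
Proof.
  intros Hz HB.
  unfold saddle_bound, saddle_defect; cbv zeta.
  set (a := arcsinh (nu / z)); set (C := cosh a).
  assert (HC : 1 <= C) by apply cosh_ge_1.
  assert (HsC : 0 < sqrt C) by (apply sqrt_lt_R0; lra).
  assert (Hu : 0 < 1 + / sqrt C) by (generalize (Rinv_0_lt_compat _ HsC); lra).
  assert (Hq : 0 < sqrt (4 * z / 3)) by (apply sqrt_lt_R0; lra).
  assert (HPI := PI_RGT_0).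
  assert (Hx0 : ln (Rpower 2 (2 * nu - 1) * PI / B ^ 2)
                = (2 * nu - 1) * ln 2 + ln PI - 2 * ln B).
  { assert (HR : 0 < Rpower 2 (2 * nu - 1)) by apply exp_pos.
    assert (HB2 : 0 < B ^ 2) by (apply pow_lt, HB).
    assert (HP : 0 < Rpower 2 (2 * nu - 1) * PI) by (apply Rmult_lt_0_compat; lra).
    unfold Rdiv.
    rewrite (ln_mult _ _ HP (Rinv_0_lt_compat _ HB2)), (ln_mult _ _ HR HPI), (ln_Rinv _ HB2),
      ln_Rpower.
    replace (B ^ 2) with (B * B) by ring; rewrite ln_mult by lra; ring. }
  assert (Hw : ln (2 * z) = ln 2 + ln z) by (apply ln_mult; lra).
  assert (HU : ln (3 / 4 * exp (- phase nu z a) / sqrt (4 * z / 3) * (1 + / sqrt C))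
               = ln 3 - 2 * ln 2 - phase nu z a - (2 * ln 2 + ln z - ln 3) / 2
                 + ln (1 + / sqrt C)).
  { assert (H4 : ln 4 = 2 * ln 2)
      by (replace 4 with (2 * 2) by ring; rewrite ln_mult; lra).
    assert (He := exp_pos (- phase nu z a)).
    rewrite ln_mult, ln_div, ln_mult, ln_exp, ln_sqrt, !ln_div, ln_mult, H4;
      try apply Rdiv_lt_0_compat; try apply Rmult_lt_0_compat; lra. }
  intros Hlt.
  apply ln_lt_inv; [| exact HB |].
  - apply Rmult_lt_0_compat; [| exact Hu].
    apply Rdiv_lt_0_compat; [apply Rmult_lt_0_compat; [lra | apply exp_pos] | exact Hq].
  - rewrite HU; unfold phase; fold C; rewrite Hx0, Hw in Hlt; lra.
Qed.

Lemma cosh_sub_1_div_sinh a :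
  0 < a -> (cosh a - 1) / sinh a = (exp a - 1) / (exp a + 1).
Proof.
  intros Ha.
  assert (HX : 1 < exp a) by (rewrite <- exp_0; apply exp_increasing, Ha).
  unfold cosh, sinh; rewrite exp_Ropp; field; repeat split; nra.
Qed.

Lemma inv_5_sinh a : 0 < a -> / (5 * sinh a) = 2 * exp a / (5 * (exp a * exp a - 1)).
Proof.
  intros Ha.
  assert (HX : 1 < exp a) by (rewrite <- exp_0; apply exp_increasing, Ha).
  unfold sinh; rewrite exp_Ropp; field; split; nra.
Qed.

Lemma cosh_ratio a :
  2 * (cosh a - 1) / (3 * cosh a + 1)
    = 2 * ((exp a - 1) * (exp a - 1)) / (3 * (exp a * exp a) + 2 * exp a + 3).
Proof.
  assert (HX := exp_pos a).
  unfold cosh; rewrite exp_Ropp; field; split; nra.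
Qed.

Lemma exp_ratios_le e X :
  1 < e -> e <= X ->
  (e - 1) / (e + 1) <= (X - 1) / (X + 1) /\
  2 * X / (5 * (X * X - 1)) <= 2 * e / (5 * (e * e - 1)) /\
  2 * ((e - 1) * (e - 1)) / (3 * (e * e) + 2 * e + 3)
    <= 2 * ((X - 1) * (X - 1)) / (3 * (X * X) + 2 * X + 3).
Proof.
  intros He HeX; repeat split; apply Rdiv_le_Rdiv; try nra.
  - assert (0 <= (X - e) * (X * e + 1)) by (apply Rmult_le_pos; nra); nra.
  - (* the cross-multiplied difference is 8 (X - e) (X e - 1) *)
    assert (0 <= (X - e) * (X * e - 1)) by (apply Rmult_le_pos; nra); nra.
Qed.

Lemma two_ln_one_add_inv_sqrt_le C :
  1 <= C -> 2 * ln (1 + / sqrt C) <= 2 * ln 2 - 2 * (C - 1) / (3 * C + 1).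
Proof.
  intros HC.
  set (v := sqrt C).
  assert (Hv : 1 <= v) by (rewrite <- sqrt_1; apply sqrt_le_1_alt, HC).
  assert (HvC : C = v * v) by (unfold v; rewrite sqrt_sqrt; lra).
  (* concavity of ln at 2: ln (1 + u) <= ln 2 + (u - 1) / 2 *)
  assert (Htan : ln (1 + / v) <= ln 2 + (/ v - 1) / 2).
  { assert (Hpos : 0 < (1 + / v) / 2) by (generalize (Rinv_0_lt_compat v ltac:(lra)); lra).
    generalize (ln_le_sub_1 _ Hpos); rewrite ln_div by lra; lra. }
  assert (Hcmp : 2 * (C - 1) / (3 * C + 1) <= 1 - / v).
  { rewrite HvC; replace (1 - / v) with ((v - 1) / v) by (field; lra).
    (* the cross-multiplied difference is (v - 1)^3 *)
    assert (0 <= (v - 1) ^ 3) by (apply pow_le; lra).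
    apply Rdiv_le_Rdiv; nra. }
  lra.
Qed.

Lemma saddle_defect_add_eq nu z :
  0 < nu -> 0 < z ->
  let a := arcsinh (nu / z) in
  saddle_defect nu z + z / 5
    = nu * (2 * (a - ln 2) - 2 * ((exp a - 1) / (exp a + 1))
            + 2 * exp a / (5 * (exp a * exp a - 1)))
      + (3 * ln 3 - 4 * ln 2 + 2 * ln (1 + / sqrt (cosh a)) - ln PI).
Proof.
  intros Hnu Hz a.
  assert (Ha : 0 < a).
  { unfold a; rewrite <- arcsinh_0; apply arcsinh_lt, Rdiv_lt_0_compat; lra. }
  assert (Hs : sinh a = nu / z) by apply sinh_arcsinh.
  assert (Hs0 : 0 < sinh a) by (rewrite Hs; apply Rdiv_lt_0_compat; lra).
  rewrite <- cosh_sub_1_div_sinh, <- inv_5_sinh by exact Ha.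
  unfold saddle_defect; cbv zeta; fold a.
  assert (Hz' : z = nu / sinh a) by (rewrite Hs; field; lra).
  rewrite Hz'; field; lra.
Qed.

Lemma kappa_le : 3 * ln 3 - 2 * ln 2 - ln PI <= 764825 / 1000000.
Proof. generalize ln_2_ge ln_3_le ln_PI_ge; lra. Qed.

Section DefectCell.
Local Open Scope Q_scope.

Definition ln2_lowerQ : Q := 693147 # 1000000.

Definition kappa_upperQ : Q := 764825 # 1000000.

(* With E <= exp lo <= exp a, K bounds 2 (a - ln 2) - 2 tanh (a / 2) + 1 / (5 sinh a) from above
   on the cell [lo, hi]; see saddle_defect_add_eq. *)
Definition defect_cellb (lo hi : Q) : bool :=
  let E := exp_taylorQ 11 lo in
  let K := 2 * (hi - ln2_lowerQ) - 2 * ((E - 1) / (E + 1)) + 2 * E / (5 * (E * E - 1)) in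
  Qltb 0 lo && Qle_bool K 0 &&
  Qltb (K + (kappa_upperQ - 2 * ((E - 1) * (E - 1)) / (3 * (E * E) + 2 * E + 3))) (27 # 50).

End DefectCell.

Lemma saddle_defect_cell lo hi :
  defect_cellb lo hi = true ->
  forall a, Q2R lo <= a <= Q2R hi ->
  forall nu z, 1 <= nu -> 0 < z -> arcsinh (nu / z) = a ->
  saddle_defect nu z + z / 5 < 27 / 50.
Proof.
  intros Hb a Ha nu z Hnu Hz Harc.
  unfold defect_cellb, ln2_lowerQ, kappa_upperQ in Hb; cbv zeta in Hb.
  apply andb_prop in Hb as [Hb HA]; apply andb_prop in Hb as [Hlo HK].
  apply Qltb_Q2R in Hlo, HA; apply Qle_bool_Q2R in HK.
  assert (Hl2 := ln_2_ge); assert (Hkappa := kappa_le).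
  assert (HE := Q2R_exp_taylorQ 11 lo).
  revert HK HA HE; generalize (exp_taylorQ 11 lo); intros E HK HA HE.
  rewrite Q2R_Qmake_1 in Hlo.
  assert (HE1 : 1 < Q2R E) by (rewrite HE; generalize (exp_taylor_ge_1_add 10 (Q2R lo)); lra).
  assert (HEX : Q2R E <= exp a).
  { rewrite HE; apply Rle_trans with (exp (Q2R lo));
      [apply exp_taylor_le_exp; lra | apply exp_le_exp; lra]. }
  Q2R_simpl_in HK; Q2R_simpl_in HA.
  set (e := Q2R E) in *; set (X := exp a) in *.
  rewrite saddle_defect_add_eq by lra; rewrite Harc; fold X.
  destruct (exp_ratios_le e X HE1 HEX) as [Hm1 [Hm2 Hm3]].
  assert (Hcr := cosh_ratio a); fold X in Hcr.
  assert (Hlog := two_ln_one_add_inv_sqrt_le (cosh a) (cosh_ge_1 a)).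
  assert (Hbracket : 2 * (a - ln 2) - 2 * ((X - 1) / (X + 1)) + 2 * X / (5 * (X * X - 1))
                     <= 2 * (Q2R hi - 693147 / 1000000) - 2 * ((e - 1) / (e + 1))
                        + 2 * e / (5 * (e * e - 1))) by lra.
  set (bracket := 2 * (a - ln 2) - _ + _) in *.
  set (K := 2 * (Q2R hi - _) - _ + _) in *.
  assert (nu * bracket <= K) by nra.
  lra.
Qed.

Definition defect_breakpoints : list Q :=
  [31 # 100; 42 # 100; 57 # 100; 72 # 100; 85 # 100; 94 # 100; 101 # 100; 105 # 100;
   108 # 100; 110 # 100; 111 # 100].

Lemma defect_chain : chainb defect_cellb (1 # 4) (defect_breakpoints ++ [28 # 25]) = true.
Proof. vm_compute; reflexivity. Qed.

Lemma arcsinh_le_28_25 s : s <= 27183 / 20000 -> arcsinh s <= 28 / 25.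
Proof.
  intros Hs; rewrite <- (arcsinh_sinh (28 / 25)); apply arcsinh_le.
  exp_taylor_check (306 # 100)%Q (28 # 25)%Q.
  assert (Hsinh := sinh_ge_of_exp_taylor 11 (28 / 25) ltac:(lra) ltac:(lra)).
  set (E := exp_taylor 11 (28 / 25)) in *.
  assert ((306 / 100 * (306 / 100) - 1) / (2 * (306 / 100)) <= (E * E - 1) / (2 * E))
    by (apply Rdiv_le_Rdiv; nra).
  lra.
Qed.

Lemma saddle_defect_neg_small nu z :
  1 <= nu -> 0 < z -> arcsinh (nu / z) <= 1 / 4 -> saddle_defect nu z < 0.
Proof.
  intros Hnu Hz Ha.
  assert (Hl2 := ln_2_ge); assert (Hkappa := kappa_le).
  unfold saddle_defect; cbv zeta; set (a := arcsinh (nu / z)) in *.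
  assert (HC := cosh_ge_1 a).
  assert (Hlog := two_ln_one_add_inv_sqrt_le (cosh a) HC).
  assert (0 <= 2 * (cosh a - 1) / (3 * cosh a + 1)) by (apply Rdiv_le_0_compat; lra).
  assert (0 <= z * (cosh a - 1)) by (apply Rmult_le_pos; lra).
  assert (nu * (a - ln 2) <= a - ln 2) by nra.
  lra.
Qed.

Lemma saddle_defect_bound nu z :
  1 <= nu -> 0 < z -> 2 / exp 1 * nu <= z ->
  saddle_defect nu z < 0 \/ saddle_defect nu z + z / 5 < 27 / 50.
Proof.
  intros Hnu Hz Hez.
  destruct (Rle_lt_dec (arcsinh (nu / z)) (1 / 4)) as [Hsmall | Hlarge];
    [left; apply saddle_defect_neg_small; assumption | right].
  assert (He := exp_1_bounds).
  assert (Hs : nu / z <= 27183 / 20000).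
  { apply Rcomplements.Rle_div_l; [exact Hz |].
    apply Rmult_le_compat_l with (r := exp 1 / 2) in Hez; [| lra].
    replace (exp 1 / 2 * (2 / exp 1 * nu)) with nu in Hez by (field; lra).
    nra. }
  assert (Ha : Q2R (1 # 4) <= arcsinh (nu / z) <= Q2R (28 # 25)).
  { rewrite !Q2R_Qmake; split; [lra |].
    replace (IZR 28 / IZR 25) with (28 / 25) by lra; apply arcsinh_le_28_25, Hs. }
  exact (chainb_cover (fun a => forall nu z, 1 <= nu -> 0 < z -> arcsinh (nu / z) = a ->
                                  saddle_defect nu z + z / 5 < 27 / 50)
           defect_cellb saddle_defect_cell defect_breakpoints (1 # 4) (28 # 25) defect_chain
           (arcsinh (nu / z)) Ha nu z Hnu Hz eq_refl).
Qed.

(** * A Lambert-type inequality *)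

Definition lambert_form (c L : R) : R := L - ln L + c * (ln L / L).

Lemma lambert_form_lt c x y :
  3 / 2 <= c <= 8 / 5 -> 1 <= x -> x < y -> lambert_form c x < lambert_form c y.
Proof.
  intros Hc Hx Hxy.
  apply (incr_function_le (lambert_form c) (Finite 1) p_infty
           (fun t => 1 - / t + c * ((1 - ln t) / (t * t)))); simpl; try lra; auto.
  - intros t Ht _; unfold lambert_form; auto_derive; [lra | field; lra].
  - intros t Ht _.
    assert (Hln := ln_le_sub_1 t ltac:(lra)).
    (* t^2 - t + c (1 - ln t) >= t^2 - (1 + c) t + 2 c > 0, as (1 + c)^2 < 8 c *)
    assert (Hsq := pow2_ge_0 (t - (1 + c) / 2)).
    replace (1 - / t + c * ((1 - ln t) / (t * t)))
      with ((t * t - t + c * (1 - ln t)) / (t * t)) by (field; lra).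
    apply Rdiv_lt_0_compat; nra.
Qed.

Lemma le_of_lambert_form_le c w y L :
  3 / 2 <= c <= 8 / 5 -> 1 <= L -> 1 <= y -> w < lambert_form c y ->
  lambert_form c L <= w -> L <= y.
Proof.
  intros Hc HL Hy Hwy HLw; apply Rnot_lt_le; intros HyL.
  generalize (lambert_form_lt c y L Hc Hy HyL); lra.
Qed.

Lemma le_add_ln_of_lambert_form_le c w L :
  3 / 2 <= c <= 8 / 5 -> 3 / 2 <= w -> 1 <= L -> lambert_form c L <= w -> L <= w + ln w.
Proof.
  intros Hc Hw HL HLw.
  assert (Hlw : 0 < ln w) by (rewrite <- ln_1; apply ln_increasing; lra).
  assert (Hlw2 : ln w <= w / 2).
  { assert (Hpos : 0 < w / 2) by lra.
    generalize (ln_le_sub_1 _ Hpos); rewrite ln_div by lra.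
    generalize (ln_lt_sub_1 2 ltac:(lra) ltac:(lra)); lra. }
  set (y := w + ln w); assert (Hyv : y = w + ln w) by reflexivity.
  apply (le_of_lambert_form_le c w y L Hc HL ltac:(unfold y; lra)); [| exact HLw].
  (* ln y - ln w = ln (1 + ln w / w) < ln w / w <= c ln y / y, because y <= 3 w / 2 <= c w *)
  assert (Hq : ln y - ln w < ln w / w).
  { rewrite <- ln_div by (unfold y; lra).
    replace (ln w / w) with (y / w - 1) by (unfold y; field; lra).
    apply ln_lt_sub_1; [apply Rdiv_lt_0_compat; unfold y; lra |].
    intros Heq; apply Rmult_eq_compat_r with (r := w) in Heq.
    unfold y, Rdiv in Heq; rewrite Rmult_assoc, Rinv_l, Rmult_1_r in Heq; lra. }
  assert (Hcy : ln w / w <= c * (ln y / y)).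
  { assert (Hly : ln w <= ln y) by (apply ln_le; unfold y; lra).
    assert (0 <= (ln y - ln w) * y) by (apply Rmult_le_pos; lra).
    assert (0 <= ln y * (c * w - y)) by (apply Rmult_le_pos; nra).
    replace (c * (ln y / y)) with (c * ln y / y) by (field; lra).
    apply Rdiv_le_Rdiv; lra. }
  unfold lambert_form; lra.
Qed.

Lemma lambert_form_shift_ge c w :
  let y := w + ln w - (27 / 50 - w / 10) in
  0 < w -> 0 < y ->
  w / 10 - 16 / 25 - (ln w - 27 / 50) / w + c * (ln y / y) <= lambert_form c y - w.
Proof.
  intros y Hw Hy.
  (* ln y - ln w = ln (y / w) <= y / w - 1 = 1 / 10 + (ln w - 27 / 50) / w *)
  assert (Hyw : ln y - ln w <= 1 / 10 + (ln w - 27 / 50) / w).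
  { rewrite <- ln_div by lra.
    replace (1 / 10 + (ln w - 27 / 50) / w) with (y / w - 1) by (unfold y; field; lra).
    apply ln_le_sub_1, Rdiv_lt_0_compat; lra. }
  assert (Hyv : y = w + ln w - (27 / 50 - w / 10)) by reflexivity.
  unfold lambert_form; lra.
Qed.

Lemma ln_div_self_cell u1 u2 w1 p1 p2 w :
  let Ya := 11 / 10 * w1 + u1 - 27 / 50 in
  let Yb := 11 / 10 * / p2 + u2 - 27 / 50 in
  let y := w + ln w - (27 / 50 - w / 10) in
  0 < w -> u1 <= ln w <= u2 ->
  w1 <= exp u1 -> 0 < p1 <= exp (- u1) -> 0 < p2 <= exp (- u2) ->
  1 <= Ya -> / p1 <= Ya -> / p2 <= Yb ->
  (u1 + 2 * (Ya - / p1) / (Ya + / p1)) / Ya <= ln y / y \/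
  (u2 + 2 * (Yb - / p2) / (Yb + / p2)) / Yb <= ln y / y.
Proof.
  intros Ya Yb y Hw Hu Hw1 Hp1 Hp2 HYa HYa1 HYb2.
  assert (Hv1 := exp_le_inv_of_le_exp_opp u1 p1 (proj1 Hp1) (proj2 Hp1)).
  assert (Hv2 := exp_le_inv_of_le_exp_opp u2 p2 (proj1 Hp2) (proj2 Hp2)).
  assert (Hwe : exp u1 <= w <= exp u2)
    by (rewrite <- (exp_ln w) by exact Hw; split; apply exp_le_exp; lra).
  assert (Hy : Ya <= y <= Yb) by (unfold Ya, Yb, y; lra).
  assert (HlA := ln_ge_of_exp_le _ _ _ Hv1 HYa1).
  assert (HlB := ln_ge_of_exp_le _ _ _ Hv2 HYb2).
  assert (HinvA : 0 < / Ya) by (apply Rinv_0_lt_compat; lra).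
  assert (HinvB : 0 < / Yb) by (apply Rinv_0_lt_compat; lra).
  destruct (ln_div_self_ge Ya Yb y ltac:(lra) ltac:(lra)) as [H | H]; [left | right];
    (eapply Rle_trans; [| exact H]); apply Rmult_le_compat_r; lra.
Qed.

Lemma ln_sub_div_le_cell u2 w1 p2 w :
  0 < w -> ln w <= u2 -> 0 < w1 <= w -> 0 < p2 -> p2 * w <= 1 ->
  (ln w - 27 / 50) / w <= (u2 - 27 / 50) / w1 \/ (ln w - 27 / 50) / w <= (u2 - 27 / 50) * p2.
Proof.
  intros Hw Hu Hw1 Hp2 Hp2w.
  destruct (Rle_lt_dec 0 (u2 - 27 / 50)); [left | right].
  - apply Rdiv_le_Rdiv; try lra.
    assert (0 <= (u2 - 27 / 50) * (w - w1)) by (apply Rmult_le_pos; lra).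
    assert (0 <= (u2 - ln w) * w1) by (apply Rmult_le_pos; lra).
    lra.
  - apply Rcomplements.Rle_div_l; [lra |].
    assert (0 <= - (u2 - 27 / 50) * (1 - p2 * w)) by (apply Rmult_le_pos; lra).
    lra.
Qed.

Section LambertCell.
Local Open Scope Q_scope.

(* A cell [u1, u2] of values of ln w: W1 <= w <= / P2, Ya <= y <= Yb for
   y = w + ln w - (27 / 50 - w / 10), and lA, lB are lower bounds of ln Ya, ln Yb. *)
Definition lambert_cellb (u1 u2 : Q) : bool :=
  let W1 := exp_taylorQ 11 u1 in
  let P1 := exp_taylorQ 11 (- u1) in
  let P2 := exp_taylorQ 11 (- u2) in
  let Ya := (11 # 10) * W1 + u1 - (27 # 50) in
  let Yb := (11 # 10) * / P2 + u2 - (27 # 50) in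
  let lA := u1 + 2 * (Ya - / P1) / (Ya + / P1) in
  let lB := u2 + 2 * (Yb - / P2) / (Yb + / P2) in
  let t := u2 - (27 # 50) in
  let slack m mu := Qltb (m - (15819 # 10000) * mu) (W1 / 10 - (16 # 25)) in
  Qle_bool 0 u1 && Qltb 0 P1 && Qltb 0 P2 &&
  Qle_bool 1 Ya && Qle_bool (/ P1) Ya && Qle_bool (/ P2) Yb &&
  slack (t / W1) (lA / Ya) && slack (t * P2) (lA / Ya) &&
  slack (t / W1) (lB / Yb) && slack (t * P2) (lB / Yb).

End LambertCell.

Lemma lambert_cell u1 u2 :
  lambert_cellb u1 u2 = true ->
  forall u, Q2R u1 <= u <= Q2R u2 ->
  forall w, 0 < w -> ln w = u ->
  forall c L, 15819 / 10000 <= c <= 8 / 5 -> 1 <= L -> lambert_form c L <= w ->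
  L <= w + ln w - (27 / 50 - w / 10).
Proof.
  intros Hb u Hu w Hw Hlnw c L Hc HL HLw; subst u.
  unfold lambert_cellb in Hb; cbv zeta in Hb.
  repeat rewrite andb_true_iff in Hb.
  destruct Hb as [[[[[[[[[Hu1 HP1] HP2] HYa] HYaV] HYbV] Hs1] Hs2] Hs3] Hs4].
  apply Qle_bool_Q2R in Hu1, HYa, HYaV, HYbV; apply Qltb_Q2R in HP1, HP2, Hs1, Hs2, Hs3, Hs4.
  assert (HW1 := Q2R_exp_taylorQ 11 u1).
  assert (HeP1 := Q2R_exp_taylorQ 11 (- u1)); assert (HeP2 := Q2R_exp_taylorQ 11 (- u2)).
  revert HP1 HP2 HYa HYaV HYbV Hs1 Hs2 Hs3 Hs4 HW1 HeP1 HeP2.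
  generalize (exp_taylorQ 11 u1) (exp_taylorQ 11 (- u1)) (exp_taylorQ 11 (- u2)).
  intros W1 P1 P2 HP1 HP2 HYa HYaV HYbV Hs1 Hs2 Hs3 Hs4 HW1 HeP1 HeP2.
  Q2R_simpl_in Hu1; Q2R_simpl_in HP1; Q2R_simpl_in HP2; rewrite Q2R_opp in HeP1, HeP2.
  assert (Hi1 : 0 < / Q2R P1) by (apply Rinv_0_lt_compat, HP1).
  assert (Hi2 : 0 < / Q2R P2) by (apply Rinv_0_lt_compat, HP2).
  assert (HW1ge : 1 <= Q2R W1) by (rewrite HW1; generalize (exp_taylor_ge_1_add 10 _ Hu1); lra).
  Q2R_simpl_in HYa; Q2R_simpl_in HYaV; Q2R_simpl_in HYbV.
  Q2R_simpl_in Hs1; Q2R_simpl_in Hs2; Q2R_simpl_in Hs3; Q2R_simpl_in Hs4.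
  assert (Hw1 : Q2R W1 <= exp (Q2R u1)) by (rewrite HW1; apply exp_taylor_le_exp, Hu1).
  assert (Hp1 : Q2R P1 <= exp (- Q2R u1))
    by (rewrite HeP1; apply exp_taylor_opp_le; [reflexivity | exact Hu1]).
  assert (Hp2 : Q2R P2 <= exp (- Q2R u2))
    by (rewrite HeP2; apply exp_taylor_opp_le; [reflexivity | lra]).
  assert (Hwe : exp (Q2R u1) <= w <= / Q2R P2).
  { rewrite <- (exp_ln w) by exact Hw; split; [apply exp_le_exp; lra |].
    apply Rle_trans with (exp (Q2R u2));
      [apply exp_le_exp; lra | apply exp_le_inv_of_le_exp_opp; lra]. }
  assert (Hp2w : Q2R P2 * w <= 1).
  { assert (Hle : Q2R P2 * w <= Q2R P2 * / Q2R P2) by (apply Rmult_le_compat_l; lra).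
    rewrite Rinv_r in Hle by lra; exact Hle. }
  assert (Hmu := ln_div_self_cell (Q2R u1) (Q2R u2) (Q2R W1) (Q2R P1) (Q2R P2) w Hw Hu Hw1
                   ltac:(lra) ltac:(lra) HYa HYaV HYbV); cbv zeta in Hmu.
  assert (Hslope := ln_sub_div_le_cell (Q2R u2) (Q2R W1) (Q2R P2) w Hw ltac:(lra) ltac:(lra)
                      HP2 Hp2w).
  assert (Hy : 1 <= w + ln w - (27 / 50 - w / 10)) by (generalize (proj1 Hu); lra).
  assert (Hgap := lambert_form_shift_ge c w Hw ltac:(lra)).
  set (y := w + ln w - (27 / 50 - w / 10)) in *.
  assert (Hlny : 0 <= ln y / y) by (apply Rdiv_le_0_compat; [rewrite <- ln_1; apply ln_le |]; lra).
  assert (Hcy : 15819 / 10000 * (ln y / y) <= c * (ln y / y)) by (apply Rmult_le_compat_r; lra).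
  apply (le_of_lambert_form_le c w y L); [lra | exact HL | exact Hy | | exact HLw].
  destruct Hslope, Hmu; lra.
Qed.

Definition lambert_breakpoints : list Q :=
  [44 # 100; 51 # 100; 61 # 100; 72 # 100; 83 # 100; 91 # 100; 98 # 100; 104 # 100;
   109 # 100; 114 # 100; 119 # 100; 124 # 100; 130 # 100; 137 # 100; 146 # 100; 159 # 100].

Lemma lambert_chain :
  chainb lambert_cellb (40 # 100) (lambert_breakpoints ++ [169 # 100]) = true.
Proof. vm_compute; reflexivity. Qed.

Lemma le_add_ln_sub_of_lambert_form_le c w L :
  15819 / 10000 <= c <= 8 / 5 -> 3 / 2 <= w <= 27 / 5 -> 1 <= L -> lambert_form c L <= w ->
  L <= w + ln w - (27 / 50 - w / 10).
Proof.
  intros Hc Hw HL HLw.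
  assert (Hu : Q2R (40 # 100) <= ln w <= Q2R (169 # 100)).
  { rewrite !Q2R_Qmake; split.
    - exp_taylor_check (2 # 3)%Q (- (40 # 100))%Q.
      apply Rle_trans with (ln (3 / 2)); [| apply ln_le; lra].
      apply (le_ln_of_exp_taylor_opp 11); [reflexivity | lra | lra | lra].
    - exp_taylor_check (54 # 10)%Q (169 # 100)%Q.
      apply Rle_trans with (ln (27 / 5)); [apply ln_le; lra |].
      apply (ln_le_of_le_exp_taylor 11); lra. }
  exact (chainb_cover (fun u => forall w, 0 < w -> ln w = u ->
                         forall c L, 15819 / 10000 <= c <= 8 / 5 -> 1 <= L ->
                         lambert_form c L <= w -> L <= w + ln w - (27 / 50 - w / 10))
           lambert_cellb lambert_cell lambert_breakpoints (40 # 100) (169 # 100) lambert_chain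
           (ln w) Hu w ltac:(lra) eq_refl c L Hc HL HLw).
Qed.

Lemma e_div_e_sub_1_bounds : 15819 / 10000 <= exp 1 / (exp 1 - 1) <= 8 / 5.
Proof.
  assert (He := exp_1_bounds).
  split; [apply (Rcomplements.Rle_div_r (15819 / 10000) (exp 1) (exp 1 - 1))
         | apply (Rcomplements.Rle_div_l (exp 1) (8 / 5) (exp 1 - 1))]; lra.
Qed.

Lemma one_le_ln_x0 nu B :
  1 <= nu -> 0 < B -> B <= 2 * sqrt (PI / (2 * exp 1)) ->
  1 <= ln (Rpower 2 (2 * nu - 1) * PI / B ^ 2).
Proof.
  intros Hnu HB HBmax.
  assert (He := exp_pos 1); assert (HPI := PI_RGT_0).
  assert (HB2 : B ^ 2 * exp 1 <= 2 * PI).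
  { assert (Hs : 0 <= PI / (2 * exp 1)) by (apply Rlt_le, Rdiv_lt_0_compat; lra).
    assert (B ^ 2 <= (2 * sqrt (PI / (2 * exp 1))) ^ 2) by (apply pow_incr; lra).
    rewrite Rpow_mult_distr in H.
    replace (sqrt (PI / (2 * exp 1)) ^ 2) with (PI / (2 * exp 1)) in H
      by (rewrite <- Rsqr_pow2, Rsqr_sqrt; [reflexivity | exact Hs]).
    apply Rmult_le_compat_r with (r := exp 1) in H; [| lra].
    replace (2 ^ 2 * (PI / (2 * exp 1)) * exp 1) with (2 * PI) in H by (field; lra).
    exact H. }
  assert (H2 : 2 <= Rpower 2 (2 * nu - 1))
    by (rewrite <- (Rpower_1 2) at 1 by lra; apply Rle_Rpower; lra).
  rewrite <- (ln_exp 1) at 1; apply ln_le; [apply exp_pos |].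
  assert (2 * PI <= Rpower 2 (2 * nu - 1) * PI) by (apply Rmult_le_compat_r; lra).
  apply (Rcomplements.Rle_div_r (exp 1) (Rpower 2 (2 * nu - 1) * PI) (B ^ 2));
    [apply pow_lt, HB | lra].
Qed.

Theorem proposition3 (nu B z : R) :
  1 <= nu ->
  0 < B -> B <= 2 * sqrt (PI / (2 * exp 1)) ->
  0 < z ->
  let x0 := Rpower 2 (2 * nu - 1) * PI / B ^ 2 in
  2 * z >= ln x0 - ln (ln x0)
           + exp 1 / (exp 1 - 1) * (ln (ln x0) / ln x0) ->
  z >= Rmax (2 / exp 1 * nu) (nu / 2 + 1 / 4) ->
  BesselK nu z < B.
Proof.
  intros Hnu HB HBmax Hz x0 Hx0 Hmax.
  assert (Hz1 := Rmax_l (2 / exp 1 * nu) (nu / 2 + 1 / 4)).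
  assert (Hz2 := Rmax_r (2 / exp 1 * nu) (nu / 2 + 1 / 4)).
  apply Rle_lt_trans with (saddle_bound nu z); [apply BesselK_le_saddle_bound; lra |].
  apply saddle_bound_lt; [exact Hz | exact HB |]; fold x0.
  assert (HL := one_le_ln_x0 nu B Hnu HB HBmax); fold x0 in HL.
  assert (Hc := e_div_e_sub_1_bounds).
  assert (Hlam : lambert_form (exp 1 / (exp 1 - 1)) (ln x0) <= 2 * z)
    by (unfold lambert_form; lra).
  assert (Hcoarse := le_add_ln_of_lambert_form_le (exp 1 / (exp 1 - 1)) (2 * z) (ln x0)
                       ltac:(lra) ltac:(lra) HL Hlam).
  destruct (saddle_defect_bound nu z Hnu Hz ltac:(lra)) as [HD | HD]; [lra |].
  destruct (Rle_lt_dec (2 * z) (27 / 5)) as [Hw | Hw]; [| lra].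
  generalize (le_add_ln_sub_of_lambert_form_le (exp 1 / (exp 1 - 1)) (2 * z) (ln x0)
                Hc ltac:(lra) HL Hlam); lra.
Qed.
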